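(* Let $n\ge 3$ be odd and $r\ge 1$. Let $w_r^n$ be any closed Eulerian trail of the graph $G_r^n$. Then $B_{w_r^n}$ belongs to the Graver basis of $I_{G_r^n}$ (i.e. it is primitive), and $$\deg(B_{w_r^n})=\frac{1}{2}\left(n+n^2\,\frac{(n-1)^r-1}{n-2}\right).$$
   Context: Graphs $G_r^n$: for an odd integer $n\ge3$, $G_0^n$ is a cycle of length $n$; for $r\ge1$, $G_r^n$ is obtained from $G_{r-1}^n$ by attaching, at each vertex $v$ of degree two in $G_{r-1}^n$, a new cycle of length $n$ that shares exactly the vertex $v$ with $G_{r-1}^n$ (the new cycles are otherwise pairwise vertex-disjoint and disjoint from $G_{r-1}^n$). Every vertex of $G_r^n$ has even degree, so $G_r^n$ has closed Eulerian trails (closed walks using every edge exactly once). For a graph $G$ with edges $e_1,\dots,e_m$, the toric ideal $I_G\subseteq\mathbb{K}[e_1,\dots,e_m]$ is the toric ideal of $A_G=\{\mathbf v_i+\mathbf v_j : \{v_i,v_j\}\in E(G)\}\subseteq\mathbb{Z}^{|V(G)|}$, i.e. the ideal generated by all binomials $\mathbf{e}^{\mathbf u}-\mathbf{e}^{\mathbf v}$ with $\sum_k u_k a_{e_k}=\sum_k v_k a_{e_k}$. For an even closed walk $w=(e_{i_1},\dots,e_{i_{2q}})$ define $B_w=\prod_{k=1}^q e_{i_{2k-1}}-\prod_{k=1}^q e_{i_{2k}}\in I_G$; its degree is $q$. A nonzero binomial $\mathbf{x}^{\mathbf u}-\mathbf{x}^{\mathbf v}$ in a toric ideal is primitive if there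 is no other binomial $\mathbf{x}^{\mathbf w}-\mathbf{x}^{\mathbf z}$ in the ideal with $\mathbf{x}^{\mathbf w}\mid\mathbf{x}^{\mathbf u}$ and $\mathbf{x}^{\mathbf z}\mid\mathbf{x}^{\mathbf v}$; the Graver basis is the set of primitive binomials. *)

From mathcomp Require Import all_boot.
Set Implicit Arguments. Unset Strict Implicit. Unset Printing Implicit Defensive.

(* A multigraph is given by a number of vertices V (vertices 0..V-1) and an
   ordered list of edges E = [e_1; ...; e_m], each edge a pair of vertices. *)
Definition graph := (nat * seq (nat * nat))%type.

Definition degE (E : seq (nat * nat)) (x : nat) : nat :=
  count (fun e => e.1 == x) E + count (fun e => e.2 == x) E.

Definition cyc_edges (s : seq nat) : seq (nat * nat) := zip s (rot 1 s).

Definition G0 (n : nat) : graph := (n, cyc_edges (iota 0 n)).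

Definition attach (n : nat) (G : graph) (v : nat) : graph :=
  (G.1 + (n - 1), G.2 ++ cyc_edges (v :: iota G.1 (n - 1))).

Definition step (n : nat) (G : graph) : graph :=
  foldl (attach n) G [seq v <- iota 0 G.1 | degE G.2 v == 2].

Definition Grn (n r : nat) : graph := iter r (step n) (G0 n).

(* incidence: column a_e = v_a + v_b, evaluated at vertex x *)
Definition inc (e : nat * nat) (x : nat) : nat := (e.1 == x) + (e.2 == x).

(* x^u - x^v lies in the toric ideal I_G  iff  A_G u = A_G v *)
Definition toric_rel (E : seq (nat * nat)) (u v : {ffun 'I_(size E) -> nat}) : Prop :=
  forall x : nat,
    \sum_(i < size E) u i * inc (nth (0, 0) E i) x
    = \sum_(i < size E) v i * inc (nth (0, 0) E i) x.

(* x^u - x^v is a primitive binomial of I_G (an element of the Graver basis) *)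
Definition primitive (E : seq (nat * nat)) (u v : {ffun 'I_(size E) -> nat}) : Prop :=
  u != v /\ toric_rel u v /\
  forall w z : {ffun 'I_(size E) -> nat},
    toric_rel w z -> w != z ->
    (forall i, w i <= u i) -> (forall i, z i <= v i) ->
    w = u /\ z = v.

(* es = (e_{i_1}, ..., e_{i_m}) (0-based edge indices) is a closed Eulerian
   trail: a closed walk v_0 e_{i_1} v_1 ... e_{i_m} v_m = v_0 using every
   edge exactly once *)
Definition closed_eulerian_trail (E : seq (nat * nat)) (es : seq nat) : Prop :=
  perm_eq es (iota 0 (size E)) /\
  exists vs : seq nat,
    size vs = (size es).+1 /\ nth 0 vs 0 = nth 0 vs (size es) /\
    forall k, k < size es ->
      let e := nth (0, 0) E (nth 0 es k) in
      ((e.1 == nth 0 vs k) && (e.2 == nth 0 vs k.+1)) ||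
      ((e.2 == nth 0 vs k) && (e.1 == nth 0 vs k.+1)).

(* B_w = prod of edges at odd positions (1-based) - prod at even positions *)
Definition Bw_plus (E : seq (nat * nat)) (es : seq nat) : {ffun 'I_(size E) -> nat} :=
  [ffun i : 'I_(size E) =>
     count (fun k => ~~ odd k && (nth 0 es k == i)) (iota 0 (size es))].
Definition Bw_minus (E : seq (nat * nat)) (es : seq nat) : {ffun 'I_(size E) -> nat} :=
  [ffun i : 'I_(size E) =>
     count (fun k => odd k && (nth 0 es k == i)) (iota 0 (size es))].

(* degree of the (homogeneous) binomial B_w *)
Definition Bw_deg (E : seq (nat * nat)) (es : seq nat) : nat :=
  \sum_(i < size E) Bw_plus E es i.

From mathcomp Require Import all_boot zify.
Set Implicit Arguments. Unset Strict Implicit. Unset Printing Implicit Defensive.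

(* Label every edge of G_r^n by a pair (colour, chosen): the colour tells whether the edge
   lies in the first monomial of B_w, and chosen whether it lies in the support of a binomial
   x^w' - x^z' of the toric ideal with x^w', x^z' dividing the two monomials of B_w.  Since the
   edges of the closed trail alternate between the two monomials, each vertex meets
   equally many edges of each colour, and equally many chosen edges of each colour.  On a cycle
   of the last level the new vertices have degree two, so colours alternate and the chosen bit is
   constant; as n - 1 is even the cycle closes up, and balance at its root forces the two older
   edges there to carry the same label.  On the lower levels this gives constant labels along
   each cycle, down to G_0^n.  Hence the chosen bit is constant on all of G_r^n, so x^w' - x^z'
   is either B_w or 0.  The degree of B_w is half the number of edges of G_r^n. *)

Fixpoint path_edges (a b V0 k : nat) : seq (nat * nat) :=
  if k is k'.+1 then (a, V0) :: path_edges V0 b V0.+1 k' else [:: (a, b)].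

Fixpoint pendant_cycles (k V0 : nat) (l : seq nat) : seq (nat * nat) :=
  if l is v :: l' then path_edges v v V0 k ++ pendant_cycles k (V0 + k) l' else [::].

Definition deg2 (G : graph) : seq nat := [seq v <- iota 0 G.1 | degE G.2 v == 2].

Lemma size_path_edges a b V0 k : size (path_edges a b V0 k) = k.+1.
Proof. by elim: k a V0 => [|k IH] a V0 //=; rewrite IH. Qed.

Lemma cyc_edges_cons v V0 k : cyc_edges (v :: iota V0 k) = path_edges v v V0 k.
Proof.
rewrite /cyc_edges rot1_cons.
have gen a b V1 : zip (a :: iota V1 k) (rcons (iota V1 k) b) = path_edges a b V1 k.
  by elim: k a V1 => [|k IH] a V1 //=; rewrite IH.
exact: gen.
Qed.

Lemma Grn0 n : 0 < n -> Grn n 0 = (n, pendant_cycles n.-1 1 [:: 0]).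
Proof. by case: n => // n _; rewrite /Grn /G0 /= -cyc_edges_cons cats0. Qed.

Lemma step_eq n G :
  step n G = (G.1 + (n - 1) * size (deg2 G), G.2 ++ pendant_cycles (n - 1) G.1 (deg2 G)).
Proof.
rewrite /step -/(deg2 G); move: (deg2 G) => l.
elim: l G => [|v l IH] [V E] /=; first by rewrite muln0 addn0 cats0.
by rewrite IH /= cyc_edges_cons catA mulnS addnA.
Qed.

Lemma GrnS n k : Grn n k.+1 = step n (Grn n k).
Proof. exact: iterS. Qed.

Lemma degE_cat E1 E2 x : degE (E1 ++ E2) x = degE E1 x + degE E2 x.
Proof. by rewrite /degE !count_cat addnACA. Qed.

Lemma degE_path_edges a b V0 k x :
  degE (path_edges a b V0 k) x = (a == x) + (b == x) + 2 * (V0 <= x < V0 + k).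
Proof.
elim: k a V0 => [|k IH] a V0; first by rewrite /degE /=; lia.
by rewrite -[path_edges _ _ _ _]cat1s degE_cat IH /degE /=; lia.
Qed.

Lemma degE_pendant_cycles k V0 l x :
  degE (pendant_cycles k V0 l) x = 2 * (count_mem x l + (V0 <= x < V0 + k * size l)).
Proof.
elim: l V0 => [|v l IH] V0 /=; first by rewrite /degE /=; lia.
rewrite degE_cat IH degE_path_edges mulnS; move: (k * size l) (count_mem x l) => m c; lia.
Qed.
Lemma deg2_uniq G : uniq (deg2 G).
Proof. exact/filter_uniq/iota_uniq. Qed.

Lemma mem_deg2 G x : (x \in deg2 G) = (x < G.1) && (degE G.2 x == 2).
Proof. by rewrite mem_filter mem_iota andbC. Qed.

Lemma size_pendant_cycles k V0 l : size (pendant_cycles k V0 l) = k.+1 * size l.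
Proof.
elim: l V0 => [|v l IH] V0 /=; first by rewrite muln0.
by rewrite size_cat size_path_edges IH mulnS.
Qed.

Lemma degE_step n G x :
  degE (step n G).2 x = degE G.2 x + 2 * ((x \in deg2 G) + (G.1 <= x < (step n G).1)).
Proof. by rewrite step_eq degE_cat degE_pendant_cycles count_uniq_mem ?deg2_uniq. Qed.

Lemma degE_Grn_ge n k : 0 < n -> forall x, (Grn n k).1 <= x -> degE (Grn n k).2 x = 0.
Proof.
move=> n_gt0; elim: k => [|k IH] x.
  by rewrite Grn0 // degE_pendant_cycles /=; lia.
rewrite GrnS; move: (Grn n k) IH => G IH xG.
have Gx : G.1 <= x by apply: leq_trans xG; rewrite step_eq leq_addr.
by rewrite degE_step mem_deg2 IH // ltnNge Gx /= ltnNge xG.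
Qed.

Lemma size_deg2_Grn n k : 0 < n -> size (deg2 (Grn n k)) = n * (n - 1) ^ k.
Proof.
move=> n_gt0; elim: k => [|k IH].
  rewrite /deg2 Grn0 // expn0 muln1 size_filter -[RHS](size_iota 0) -count_predT.
  by apply: eq_in_count => x; rewrite mem_iota degE_pendant_cycles /=; lia.
have above := @degE_Grn_ge n k n_gt0.
rewrite GrnS expnS mulnCA -IH; move: (Grn n k) above => G above.
have old : count (fun x => degE (step n G).2 x == 2) (iota 0 G.1) = 0.
  rewrite (eq_in_count (a2 := pred0)) ?count_pred0 // => x.
  by rewrite mem_iota add0n degE_step mem_deg2 /= => xG; rewrite xG leqNgt xG /=; lia.
have new : count (fun x => degE (step n G).2 x == 2) (iota G.1 ((n - 1) * size (deg2 G)))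
    = (n - 1) * size (deg2 G).
  rewrite -[RHS](size_iota G.1) -[RHS]count_predT; apply: eq_in_count => x.
  rewrite mem_iota degE_step mem_deg2 step_eq /= => xrange.
  by rewrite above ?ltnNge; lia.
by rewrite [in LHS]/deg2 size_filter {2}step_eq iotaD count_cat old new.
Qed.

Lemma size_Grn n k : 0 < n -> size (Grn n k).2 = n + n * n * \sum_(j < k) (n - 1) ^ j.
Proof.
move=> n_gt0; elim: k => [|k IH].
  by rewrite Grn0 // size_pendant_cycles big_ord0 muln0 addn0 muln1 prednK.
rewrite GrnS step_eq size_cat size_pendant_cycles size_deg2_Grn // IH big_ord_recr /=.
by rewrite subn1 prednK // mulnDr addnA mulnA.
Qed.

Lemma map_fst_split (A B : Type) (T : seq (A * B)) s1 s2 : map fst T = s1 ++ s2 ->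
  map fst (take (size s1) T) = s1 /\ map fst (drop (size s1) T) = s2.
Proof. by move=> ET; rewrite map_take map_drop ET take_size_cat ?drop_size_cat. Qed.

Section Star.

Variable L : Type.
Implicit Types (T C : seq ((nat * nat) * L)).

Definition star T (x : nat) : seq L := flatten [seq nseq (inc t.1 x) t.2 | t <- T].

Lemma star_cat T1 T2 x : star (T1 ++ T2) x = star T1 x ++ star T2 x.
Proof. by rewrite /star map_cat flatten_cat. Qed.

Lemma size_star T x : size (star T x) = degE (map fst T) x.
Proof.
elim: T => [|t T IH] //=.
by rewrite size_cat size_nseq IH /degE /inc /=; lia.
Qed.

Lemma star_path_edges x0 a b V0 k C x : map fst C = path_edges a b V0 k -> a < V0 -> b < V0 ->
  let D := map snd C in
  star C x = nseq (a == x) (nth x0 D 0)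
    ++ (if V0 <= x < V0 + k then [:: nth x0 D (x - V0); nth x0 D (x - V0).+1] else [::])
    ++ nseq (b == x) (nth x0 D k).
Proof.
elim: k a V0 C => [|k IH] a V0 [|[e d] C] //= [-> EC] aV0 bV0.
  case: C EC => // _; rewrite /star /= cats0 ifF; last lia.
  by rewrite /inc /= nseqD.
rewrite /star /= -/(star C x) (IH V0 V0.+1 C EC (ltnSn V0) (ltnW bV0)) /inc /= nseqD -catA.
congr (_ ++ _); case: (ltngtP x V0) => [xV0|V0x|<-] //=.
- have -> : x - V0 = (x - V0.+1).+1 by lia.
  by rewrite addSnnS.
- by rewrite subnn ifT // addnS ltnS leq_addr.
Qed.

Lemma star_eq_nil T x : degE (map fst T) x = 0 -> star T x = [::].
Proof. by move=> deg0; apply: size0nil; rewrite size_star. Qed.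

End Star.

Section CycleLabels.

Variables (L : eqType) (f : L -> L).
Implicit Types (T C : seq ((nat * nat) * L)).

Lemma cycle_traject v V0 k C : map fst C = path_edges v v V0 k -> v < V0 ->
  (forall j d1 d2, j < k -> star C (V0 + j) = [:: d1; d2] -> f d1 = d2) ->
  exists d, map snd C = traject f d k.+1 /\ star C v = [:: d; iter k f d].
Proof.
move=> EC vV0 fresh_f.
have sizeD : size (map snd C) = k.+1 by rewrite size_map -(size_map fst) EC size_path_edges.
case ED: (map snd C) sizeD => [//|d s] [size_s].
have starC x0 x := star_path_edges x0 x EC vV0 vV0.
have fpath_s : fpath f d s.
  apply/(pathP d) => j; rewrite size_s => jk; apply/eqP/(fresh_f j) => //.
  have vj : (v == V0 + j) = false by apply/eqP; lia.
  by rewrite (starC d) ED vj addKn ifT //; lia.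
have [m Es] := fpathP fpath_s.
have mk : m = k by rewrite -size_s Es size_traject.
subst m s; exists d; split=> //.
rewrite (starC d) ED eqxx ifF; last by lia.
by rewrite /= -trajectS nth_traject.
Qed.

Lemma pendant_cycles_traject k V0 l TL :
  map fst TL = pendant_cycles k V0 l -> uniq l -> {in l, forall v, v < V0} ->
  (forall x d1 d2, V0 <= x < V0 + k * size l -> star TL x = [:: d1; d2] -> f d1 = d2) ->
  (forall v, v \in l -> exists d, star TL v = [:: d; iter k f d]) /\
  (forall t, t \in TL -> exists2 v, v \in l &
     exists2 d, star TL v = [:: d; iter k f d] & t.2 \in traject f d k.+1).
Proof.
elim: l V0 TL => [|v l IH] V0 TL ETL; first by case: TL ETL.
move=> /= /andP [vNl uniq_l] lV0 fresh_f.
have [EC ETL'] := map_fst_split ETL; rewrite size_path_edges in EC ETL'.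
set C := take k.+1 TL in EC; set TL' := drop k.+1 TL in ETL'.
have starTL x : star TL x = star C x ++ star TL' x by rewrite -star_cat cat_take_drop.
have vV0 : v < V0 by apply: lV0; rewrite mem_head.
have lV0' u : u \in l -> u < V0 by move=> ul; apply: lV0; rewrite inE ul orbT.
have C_nil x : x != v -> (x < V0) || (V0 + k <= x) -> star C x = [::].
  move=> /negbTE xv xout; apply: star_eq_nil.
  by rewrite EC degE_path_edges eq_sym xv; lia.
have TL'_nil x : x \notin l -> x < V0 + k -> star TL' x = [::].
  move=> xl xlt; apply: star_eq_nil.
  by rewrite ETL' degE_pendant_cycles (count_memPn xl); lia.
have starTL_l u : u \in l -> star TL u = star TL' u.
  move=> ul; rewrite starTL C_nil ?lV0' //.
  by apply: contraNneq vNl => <-.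
have freshC j d1 d2 : j < k -> star C (V0 + j) = [:: d1; d2] -> f d1 = d2.
  move=> jk starCj; apply: (fresh_f (V0 + j)); first by rewrite mulnS; lia.
  rewrite starTL starCj TL'_nil ?cats0 //; last by lia.
  by apply/negP => /lV0'; lia.
have [d [ED starC]] := cycle_traject EC vV0 freshC.
have fresh' x d1 d2 : V0 + k <= x < V0 + k + k * size l ->
    star TL' x = [:: d1; d2] -> f d1 = d2.
  move=> xrange starx; apply: (fresh_f x); first by rewrite mulnS; lia.
  by rewrite starTL C_nil ?starx //; lia.
have lVk u : u \in l -> u < V0 + k by move=> /lV0'; lia.
have [IHroot IHlabel] := IH (V0 + k) TL' ETL' uniq_l lVk fresh'.
split.
- move=> u; rewrite inE => /predU1P [-> | ul]; last by rewrite starTL_l //; apply: IHroot.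
  by exists d; rewrite starTL TL'_nil ?cats0 //; lia.
- move=> t; rewrite -{1}(cat_take_drop k.+1 TL) mem_cat => /orP [tC | tTL'].
    exists v; rewrite ?mem_head //; exists d; last by rewrite -trajectS -ED map_f.
    by rewrite starTL TL'_nil ?cats0 //; lia.
  have [u ul [d' starTL'u td']] := IHlabel t tTL'.
  by exists u; rewrite ?inE ?ul ?orbT //; exists d'; rewrite ?starTL_l.
Qed.

End CycleLabels.

Definition flip (d : bool * bool) : bool * bool := (~~ d.1, d.2).

Definition balanced (s : seq (bool * bool)) : bool :=
  (2 * count fst s == size s) &&
  (count (fun d => d.1 && d.2) s == count (fun d => ~~ d.1 && d.2) s).

Lemma balanced_pair d1 d2 : balanced [:: d1; d2] -> d2 = flip d1.
Proof. by case: d1 d2 => [[] []] [[] []]. Qed.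

Lemma balanced_root d1 d2 d : balanced [:: d1; d2; d; d] -> d1 = flip d /\ d2 = flip d.
Proof. by case: d1 d2 d => [[] []] [[] []] [[] []]. Qed.

Lemma iter_id (A : Type) m (x : A) : iter m id x = x.
Proof. by elim: m => //= m ->. Qed.

Lemma iter_flip m d : iter m flip d = if odd m then flip d else d.
Proof. by elim: m => //= m ->; case: (odd m); case: d => [[] []]. Qed.

(* Vertices of degree two will be the roots of the next level, where both edges must carry the
   same label; at the top level f = flip expresses that the colours alternate instead. *)
Definition consistent f (T : seq ((nat * nat) * (bool * bool))) : Prop :=
  forall x, if star T x is [:: d1; d2] then f d1 == d2 else balanced (star T x).

Definition uniform (T : seq ((nat * nat) * (bool * bool))) : Prop :=
  exists s0, all (fun d : bool * bool => d.2 == s0) (map snd T).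

Lemma mem_star (L : eqType) (T : seq ((nat * nat) * L)) x : {subset star T x <= map snd T}.
Proof.
elim: T => [|t T IH] //= d; rewrite /star /= -/(star T x) mem_cat inE.
by case/orP=> [/nseqP [-> _] | /IH ->]; rewrite ?eqxx ?orbT.
Qed.

(* The labels along each new cycle form an f-orbit which closes up, so its root sees one label
   twice; balance at the root then forces the two older edges there to share a label. *)
Lemma consistent_step f n G T :
  iter (n - 1) f =1 id -> (forall d, (f d).2 = d.2) ->
  (forall x, G.1 <= x -> degE G.2 x = 0) ->
  map fst T = (step n G).2 -> consistent f T ->
  exists2 T1, map fst T1 = G.2 & consistent id T1 /\ (uniform T1 -> uniform T).
Proof.
move=> f_closed f_snd G_below; rewrite step_eq /= => /map_fst_split [ET1 ET2].
rewrite -(cat_take_drop (size G.2) T) => cons.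
set T1 := take _ T in ET1 cons *; set T2 := drop _ T in ET2 cons *; exists T1 => //.
have T1_nil x : G.1 <= x -> star T1 x = [::].
  by move=> Gx; apply: star_eq_nil; rewrite ET1 G_below.
have T2_nil x : x < G.1 -> x \notin deg2 G -> star T2 x = [::].
  move=> xG xD; apply: star_eq_nil.
  by rewrite ET2 degE_pendant_cycles (count_memPn xD) leqNgt xG.
have fresh x d1 d2 : G.1 <= x < G.1 + (n - 1) * size (deg2 G) ->
    star T2 x = [:: d1; d2] -> f d1 = d2.
  by move=> /andP [Gx _] E2; apply/eqP; have := cons x; rewrite star_cat T1_nil // E2.
have D_lt : {in deg2 G, forall v, v < G.1} by move=> v; rewrite mem_deg2 => /andP [].
have [roots labels] := pendant_cycles_traject ET2 (deg2_uniq G) D_lt fresh.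
have root_flip v : v \in deg2 G ->
    exists d, star T1 v = [:: flip d; flip d] /\ star T2 v = [:: d; d].
  move=> vD; have [d] := roots v vD; rewrite f_closed => E2.
  have : size (star T1 v) = 2.
    by rewrite size_star ET1; move: vD; rewrite mem_deg2 => /andP [_ /eqP].
  case E1: (star T1 v) => [|a [|b []]] // _; exists d; split=> //.
  by have := cons v; rewrite star_cat E1 E2 => /balanced_root [-> ->].
split.
- move=> x; case: (ltnP x G.1) => [xG | Gx]; last by rewrite T1_nil.
  case xD: (x \in deg2 G); first by have [d [-> _]] := root_flip x xD.
  have := cons x; rewrite star_cat T2_nil ?xD // cats0.
  have : size (star T1 x) != 2.
    by rewrite size_star ET1; move: xD; rewrite mem_deg2 xG => /negbT.
  by case: (star T1 x) => [|a [|b []]].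
- move=> [s0 /allP snd1]; exists s0; rewrite map_cat all_cat (introT allP snd1) /=.
  apply/allP => _ /mapP [t tT2 ->].
  have [v vD [d E2 /trajectP [i _ ->]]] := labels t tT2.
  have [d' [E1 E2']] := root_flip v vD.
  have dd' : d = d' by move: E2'; rewrite E2 f_closed => -[].
  subst d'.
  have iter_snd j : (iter j f d).2 = d.2 by elim: j => //= j <-.
  rewrite iter_snd; apply: (snd1 (flip d)) (mem_star (x := v) _).
  by rewrite E1 mem_head.
Qed.

Lemma consistent_uniform n k T : 0 < n ->
  map fst T = (Grn n k).2 -> consistent id T -> uniform T.
Proof.
move=> n_gt0; elim: k T => [|k IH] T ET cons; last first.
  rewrite GrnS in ET; have [T1 ET1 [cons1 unif]] := consistent_step (iter_id _)
    (fun _ => erefl) (@degE_Grn_ge n k n_gt0) ET cons.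
  exact: unif (IH T1 ET1 cons1).
rewrite Grn0 // in ET.
have fresh x d1 d2 : 1 <= x < 1 + n.-1 * 1 -> star T x = [:: d1; d2] -> id d1 = d2.
  by move=> _ Ex; apply/eqP; have := cons x; rewrite Ex.
have root_lt : {in [:: 0], forall v, v < 1} by move=> v; rewrite inE => /eqP ->.
have [roots labels] := pendant_cycles_traject ET isT root_lt fresh.
have [d0 E0] := roots 0 (mem_head _ _).
exists d0.2; apply/allP => _ /mapP [t tT ->].
have [v] := labels t tT; rewrite inE => /eqP -> [d E /trajectP [i _ ->]].
by rewrite iter_id; move: E; rewrite E0 => -[-> _].
Qed.

Lemma balanced_uniform n k T : odd n ->
  map fst T = (Grn n k.+1).2 -> (forall x, balanced (star T x)) -> uniform T.
Proof.
move=> n_odd ET bal; have n_gt0 : 0 < n by case: n n_odd {ET}.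
have cons : consistent flip T.
  by move=> x; have := bal x; case: (star T x) => [|d1 [|d2 []]] // /balanced_pair ->.
have flip_closed : iter (n - 1) flip =1 id by move=> d; rewrite iter_flip oddB // n_odd.
rewrite GrnS in ET; have [T1 ET1 [cons1 unif]] := consistent_step flip_closed
  (fun _ => erefl) (@degE_Grn_ge n k n_gt0) ET cons.
exact: unif (consistent_uniform n_gt0 ET1 cons1).
Qed.

Lemma count_star (L : Type) (p : pred L) (T : seq ((nat * nat) * L)) x :
  count p (star T x) = \sum_(t <- T) p t.2 * inc t.1 x.
Proof.
elim: T => [|t T IH]; first by rewrite big_nil.
by rewrite big_cons /star /= -/(star T x) count_cat count_nseq IH.
Qed.

Lemma count_sum (T : Type) (q : pred T) r : count q r = \sum_(x <- r) q x.
Proof. by elim: r => [|x r IH]; rewrite ?big_nil ?big_cons //= IH. Qed.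

Lemma sum_count_nth (P : pred nat) (s : seq nat) m (g : nat -> nat) :
  (forall k, k < size s -> nth 0 s k < m) ->
  \sum_(i < m) count (fun k => P k && (nth 0 s k == i)) (iota 0 (size s)) * g i =
  \sum_(k <- iota 0 (size s)) P k * g (nth 0 s k).
Proof.
move=> s_lt.
rewrite (eq_bigr (fun i : 'I_m =>
  \sum_(k <- iota 0 (size s)) (P k && (nth 0 s k == i)) * g i)); last first.
  by move=> i _; rewrite count_sum big_distrl.
rewrite exchange_big /= big_seq [RHS]big_seq; apply: eq_bigr => k.
rewrite mem_iota add0n => /s_lt sk_lt; rewrite (bigD1 (Ordinal sk_lt)) //= eqxx andbT.
rewrite big1 ?addn0 // => i /negbTE iNk.
by rewrite eq_sym -val_eqE /= in iNk; rewrite iNk andbF.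
Qed.

Lemma sum_alternate_pairs p (a : nat -> nat) :
  \sum_(k <- iota 0 p.*2) ~~ odd k * (a k + a k.+1) + a p.*2 =
  \sum_(k <- iota 0 p.*2) odd k * (a k + a k.+1) + a 0.
Proof.
elim: p => [|p IH]; first by rewrite !big_nil.
rewrite doubleS -addn2 iotaD !big_cat /= !big_cons !big_nil /= odd_double /= add0n addn2.
by move: IH; lia.
Qed.

Lemma count_even_iota p : count (fun k => ~~ odd k) (iota 0 p.*2) = p.
Proof.
elim: p => [|p IH] //.
by rewrite doubleS -addn2 iotaD count_cat IH /= odd_double; lia.
Qed.

Section EulerianTrail.

Variables (E : seq (nat * nat)) (es : seq nat).
Hypothesis es_perm : perm_eq es (iota 0 (size E)).

Lemma size_trail : size es = size E.
Proof. by rewrite (perm_size es_perm) size_iota. Qed.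

Lemma nth_trail_lt k : k < size es -> nth 0 es k < size E.
Proof.
by move=> k_lt; have := mem_nth 0 k_lt; rewrite (perm_mem es_perm) mem_iota.
Qed.

Lemma Bw_plus_minus i : Bw_plus E es i + Bw_minus E es i = 1.
Proof.
have split_parity (q : pred nat) r :
    count (fun k => ~~ odd k && q k) r + count (fun k => odd k && q k) r = count q r.
  by elim: r => //= k r <-; case: (odd k); case: (q k); lia.
rewrite !ffunE split_parity.
have -> : count (fun k => nth 0 es k == i) (iota 0 (size es)) = count_mem (i : nat) es.
  by rewrite -[in RHS](mkseq_nth 0 es) /mkseq count_map.
by rewrite (permP es_perm) count_uniq_mem ?iota_uniq // mem_iota ltn_ord.
Qed.

Lemma double_Bw_deg : ~~ odd (size E) -> 2 * Bw_deg E es = size E.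
Proof.
move=> E_even; have [p Ep] : exists p, size es = p.*2.
  by exists (size es)./2; rewrite -[LHS]odd_double_half size_trail (negbTE E_even).
transitivity (2 * \sum_(i < size E)
    count (fun k => ~~ odd k && (nth 0 es k == i)) (iota 0 (size es)) * 1).
  by congr (_ * _); apply: eq_bigr => i _; rewrite ffunE muln1.
rewrite (sum_count_nth (fun k => ~~ odd k) (fun _ => 1) nth_trail_lt) -size_trail Ep.
under eq_bigr => k _ do rewrite muln1.
by rewrite -count_sum count_even_iota mul2n.
Qed.

End EulerianTrail.

Lemma toric_Bw E es : closed_eulerian_trail E es -> ~~ odd (size E) ->
  toric_rel (Bw_plus E es) (Bw_minus E es).
Proof.
move=> [es_perm [vs [_ [closed walk]]]] E_even x.
have trail_sum (P : pred nat) :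
    \sum_(i < size E) count (fun k => P k && (nth 0 es k == i)) (iota 0 (size es))
      * inc (nth (0, 0) E i) x =
    \sum_(k <- iota 0 (size es)) P k * ((nth 0 vs k == x) + (nth 0 vs k.+1 == x)).
  rewrite (sum_count_nth P (fun i => inc (nth (0, 0) E i) x) (nth_trail_lt es_perm)).
  rewrite big_seq [RHS]big_seq.
  apply: eq_bigr => k; rewrite mem_iota add0n => /walk /=; rewrite /inc.
  by case/orP => /andP [/eqP -> /eqP ->] //; rewrite addnC.
rewrite /Bw_plus /Bw_minus.
under eq_bigr => i _ do rewrite ffunE.
under [RHS]eq_bigr => i _ do rewrite ffunE.
rewrite (trail_sum (fun k => ~~ odd k)) (trail_sum odd).
have [p Ep] : exists p, size es = p.*2.
  by exists (size es)./2; rewrite -[LHS]odd_double_half (size_trail es_perm) (negbTE E_even).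
have := sum_alternate_pairs p (fun j => nth 0 vs j == x).
by rewrite -Ep -closed => /addIn.
Qed.

Lemma edge_indicators a b c d : a + b = 1 -> c <= a -> d <= b ->
  [/\ nat_of_bool (a == 1) = a, nat_of_bool ((a == 1) && (c + d == 1)) = c
    & nat_of_bool (~~ (a == 1) && (c + d == 1)) = d].
Proof. by move=> *; split; lia. Qed.

Lemma Bw_primitive E es :
  closed_eulerian_trail E es -> ~~ odd (size E) -> 0 < size E ->
  (forall T, map fst T = E -> (forall x, balanced (star T x)) -> uniform T) ->
  primitive (Bw_plus E es) (Bw_minus E es).
Proof.
move=> trail E_even E_gt0 rigid; have [es_perm _] := trail.
set u := Bw_plus E es; set v := Bw_minus E es.
have uv1 i : u i + v i = 1 := Bw_plus_minus es_perm i.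
have uv : toric_rel u v := toric_Bw trail E_even.
split; first by apply/eqP => u_eq_v; have := uv1 (Ordinal E_gt0); rewrite u_eq_v; lia.
split=> // w z wz w_neq_z wu zv.
(* [w i + z i == 1] holds exactly on the support of w + z, as w <= u, z <= v and u + v = 1. *)
pose lab i : bool * bool := (u i == 1, w i + z i == 1).
pose T := [seq (nth (0, 0) E i, lab i) | i : 'I_(size E)].
have ET : map fst T = E.
  rewrite -map_comp (@eq_map _ _ _ (nth (0, 0) E \o val)) // map_comp val_enum_ord.
  exact: mkseq_nth.
have sumT (F : bool * bool -> nat) x :
    \sum_(t <- T) F t.2 * inc t.1 x = \sum_(i < size E) F (lab i) * inc (nth (0, 0) E i) x.
  by rewrite big_map big_enum.
have bal x : balanced (star T x).
  have ind i := edge_indicators (uv1 i) (wu i) (zv i).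
  rewrite /balanced -count_predT !count_star (sumT (fun d => d.1)) (sumT (fun d => predT d)).
  rewrite (sumT (fun d => d.1 && d.2)) (sumT (fun d => ~~ d.1 && d.2)) /=.
  apply/andP; split; apply/eqP.
    transitivity (\sum_(i < size E) u i * inc (nth (0, 0) E i) x +
                  \sum_(i < size E) v i * inc (nth (0, 0) E i) x).
      rewrite -(uv x) addnn -mul2n; congr (_ * _).
      by apply: eq_bigr => i _; have [-> _ _] := ind i.
    by rewrite -big_split; apply: eq_bigr => i _ /=; rewrite -mulnDl uv1.
  transitivity (\sum_(i < size E) w i * inc (nth (0, 0) E i) x).
    by apply: eq_bigr => i _; have [_ -> _] := ind i.
  by rewrite (wz x); apply: eq_bigr => i _; have [_ _ ->] := ind i.
have [s0 /allP same_s0] := rigid T ET bal.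
have lab_s0 i : (w i + z i == 1) = s0.
  have lab_T : lab i \in map snd T.
    by apply: (map_f snd (x := (nth (0, 0) E i, lab i))); apply: map_f; rewrite mem_enum.
  by have /= /eqP := same_s0 _ lab_T.
have edge i := (uv1 i, wu i, zv i, lab_s0 i).
case: s0 lab_s0 {same_s0} edge => _ edge.
  by split; apply/ffunP => i; case: (edge i) => [[[]]] /=; lia.
by case/eqP: w_neq_z; apply/ffunP => i; case: (edge i) => [[[]]] /=; lia.
Qed.

Lemma geometric_sum q r : q * \sum_(j < r) q.+1 ^ j + 1 = q.+1 ^ r.
Proof.
elim: r => [|r IH]; first by rewrite big_ord0 muln0.
by rewrite big_ord_recr mulnDr addnAC IH expnS mulSn addnC.
Qed.

Lemma odd_geometric_sum q r : odd q -> 0 < r -> odd (\sum_(j < r) q.+1 ^ j).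
Proof.
move=> q_odd r_gt0; have := congr1 odd (geometric_sum q r).
by rewrite oddD oddM oddX (negbTE (lt0n_neq0 r_gt0)) /= q_odd; case: (odd _).
Qed.

Theorem proposition4p1 (n r : nat) (es : seq nat) :
  3 <= n -> odd n -> 1 <= r ->
  closed_eulerian_trail (Grn n r).2 es ->
  primitive (Bw_plus (Grn n r).2 es) (Bw_minus (Grn n r).2 es) /\
  2 * Bw_deg (Grn n r).2 es = n + n ^ 2 * (((n - 1) ^ r - 1) %/ (n - 2)).
Proof.
move=> n_ge3 n_odd r_gt0 trail.
have [q Enq] : exists q, n = q.+2 by exists (n - 2); lia.
subst n; have q_odd : odd q by move: n_odd; rewrite /= negbK.
have E_size : size (Grn q.+2 r).2 = q.+2 + q.+2 * q.+2 * \sum_(j < r) q.+1 ^ j.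
  by rewrite size_Grn // subn1.
have E_even : ~~ odd (size (Grn q.+2 r).2).
  by rewrite E_size oddD !oddM /= q_odd odd_geometric_sum.
split.
  apply: Bw_primitive trail E_even _ _; first by rewrite E_size.
  move=> T ET bal; rewrite -(prednK r_gt0) in ET; exact: balanced_uniform n_odd ET bal.
have [es_perm _] := trail.
have q_gt0 : 0 < q by move: q_odd; rewrite lt0n; apply: contraTneq => ->.
have -> : (q.+2 - 1) ^ r - 1 = q * \sum_(j < r) q.+1 ^ j.
  by rewrite subn1 /= -(geometric_sum q r) addn1.
by rewrite (double_Bw_deg es_perm E_even) E_size subSS subSS subn0 mulKn // mulnn.
Qed.
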